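(* Let $f \in \mathbb{N}_0[x^{\pm 1}]$ with $|\operatorname{supp}(f)| \geq 3$, and suppose there is a prime number $p$ with $\frac{5f(1)}{6} - 1 \leq p \leq f(1) - 2$. Then $f$ can be written as the sum of two irreducible elements of $\mathbb{N}_0[x^{\pm 1}]$.
   Context: $\mathbb{N}_0[x^{\pm 1}]$ denotes the semiring of Laurent polynomials in $x$ with nonnegative integer coefficients; $\operatorname{supp}(f)$ is the set of exponents occurring in $f$ with nonzero coefficient, and $f(1)$ is the sum of the coefficients. Its units are exactly $x^k$, $k\in\mathbb{Z}$. An element $f$ is irreducible if it is nonzero, not a unit, and whenever $f = gh$ with $g,h \in \mathbb{N}_0[x^{\pm 1}]$ one of $g,h$ is a unit. *)

From mathcomp Require Import all_boot all_algebra.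
Set Implicit Arguments. Unset Strict Implicit. Unset Printing Implicit Defensive.
Import GRing.Theory Num.Theory.

(* Elements of N_0[x^{+-1}]: a pair (k, p) represents x^k * p(x), p : {poly nat}.
   Representations are not unique; every notion below is defined through
   the coefficient function [lcoef], hence representation-independent. *)
Definition laurent := (int * {poly nat})%type.

Definition lcoef (f : laurent) (n : int) : nat :=
  if (f.1 <= n)%R then nth 0%N f.2 `|(n - f.1)%R|%N else 0%N.

Definition leqv (f g : laurent) : Prop := forall n, lcoef f n = lcoef g n.

Definition lmul (f g : laurent) : laurent := ((f.1 + g.1)%R, (f.2 * g.2)%R).

Definition lunit (u : laurent) : Prop :=
  exists k : int, forall n, lcoef u n = (n == k : nat).

Definition lirreducible (f : laurent) : Prop :=
  [/\ exists n, lcoef f n <> 0%N,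
      ~ lunit f &
      forall g h : laurent, leqv f (lmul g h) -> lunit g \/ lunit h].

Definition supp_size (f : laurent) : nat := count (fun c : nat => c != 0%N) f.2.

Definition eval1 (f : laurent) : nat := (f.2).[1%N]%R.

From mathcomp Require Import all_boot all_algebra.
From mathcomp Require Import all_order zify ring lra.
Set Implicit Arguments. Unset Strict Implicit. Unset Printing Implicit Defensive.
Import Order.TTheory GRing.Theory Num.Theory.
Local Open Scope ring_scope.

(* Write f = x^k F with F(0) <> 0; the support condition forces t := deg F >= 1.
   Since F |-> F(1) is multiplicative and only monomials take the value 1, any G
   with G(1) prime is irreducible, so it suffices to split F = G + H with
   H(1) = m := F(1) - p and H irreducible.  We take H "lopsided": nonzero
   constant term, some coefficient equal to 1, and no two nonzero coefficients
   at positions i, j > 0 with i + j = deg H.  Such an H has no factorisation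
   A B into nonconstant factors, because the coefficients of A B at deg A and
   at deg B are both nonzero.  To find H, remove 1 + x^t from F and sort the
   remaining coefficients by position below, at, or above t/2.  The lower bound
   on p gives 3 (m - 2) < F(1), so either one side carries mass m - 2, and H is
   1 + x^t plus part of that side, or the middle carries mass m - 1, and H is
   1 + (m - 1) x^(t/2). *)

Section NatPoly.
Implicit Types (F G H P Q R A B : {poly nat}).

Lemma horner1_eq0 P : P.[1%N] = 0%N -> P = 0.
Proof.
elim/poly_ind: P => [//|P c IH]; rewrite hornerMXaddC mulr1 => /eqP.
by rewrite addn_eq0 => /andP[/eqP/IH-> /eqP->]; rewrite mul0r add0r.
Qed.

Lemma horner1_eq1 P : P.[1%N] = 1%N -> P`_0 != 0%N -> P = 1.
Proof.
elim/poly_ind: P => [|P c _]; first by rewrite coef0.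
rewrite hornerMXaddC coefD coefMX coefC /= mulr1 => P1 c0.
have [/horner1_eq0-> ->] : P.[1%N] = 0%N /\ c = 1%N by lia.
by rewrite mul0r add0r.
Qed.

Lemma poly_Xn_normal P : P != 0 ->
  exists v Q, P = 'X^v * Q /\ Q`_0 != 0%N.
Proof.
elim/poly_ind: P => [|P c IH]; first by rewrite eqxx.
have [-> nz|c0 _] := eqVneq c 0%N; last first.
  by exists 0%N, (P * 'X + c%:P); rewrite mul1r coefD coefMX coefC.
have /IH[v [Q [-> Q0]]] : P != 0 by apply: contraNneq nz => ->; rewrite mul0r add0r.
by exists v.+1, Q; rewrite addr0 exprS; split; [ring | ].
Qed.

Lemma count_nz_Xn_mul (v : nat) P :
  count (fun c : nat => c != 0%N) ('X^v * P) = count (fun c : nat => c != 0%N) P.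
Proof.
have [->|P0] := eqVneq P 0; first by rewrite mulr0.
by rewrite mulrC polyseqMXn // -cat_nseq count_cat count_nseq mul0n.
Qed.

Lemma horner1_split P k : (k <= P.[1%N])%N -> exists Q R, P = Q + R /\ Q.[1%N] = k.
Proof.
elim/poly_ind: P k => [|P c IH] k.
  by rewrite horner0 leqn0 => /eqP->; exists 0, 0; rewrite addr0 horner0.
rewrite hornerMXaddC mulr1 => hk; have [/IH[Q [R [-> <-]]]|kP] := leqP k P.[1%N].
  by exists (Q * 'X), (R * 'X + c%:P); rewrite hornerMX mulr1; split; [ring | ].
exists (P * 'X + (k - P.[1%N])%N%:P), (c - (k - P.[1%N]))%N%:P.
rewrite hornerMXaddC mulr1 -addrA -polyCD natrDE subnKC; last by lia.
by split; [| lia].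
Qed.

Lemma poly_nat_complement P Q : (forall i, leq (Q`_i)%R (P`_i)%R) -> exists R, P = Q + R.
Proof.
move=> QP; exists (\poly_(i < size P) ((P`_i)%R - (Q`_i)%R)%N); apply/polyP => i.
rewrite coefD coef_poly; case: ltnP => [_|/leq_sizeP Pz]; first by rewrite natrDE subnKC.
by have := QP i; rewrite Pz // leqn0 => /eqP->.
Qed.

Lemma leq_coefM A B i j : (j <= i)%N -> leq (A`_j * B`_(i - j))%R ((A * B)`_i)%R.
Proof. by move=> ji; rewrite coefM (bigD1 (Ordinal (ji : j < i.+1)%N)) //= leq_addr. Qed.

Lemma size_poly_eqS P d :
  P`_d != 0%N -> (forall i, (d < i)%N -> P`_i = 0%N) -> size P = d.+1.
Proof.
move=> Pd Pz; apply/eqP; rewrite eqn_leq; apply/andP; split; first exact/leq_sizeP.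
by rewrite ltnNge; apply: contra Pd => /leq_sizeP->.
Qed.

Definition poly_restrict (S : pred nat) P : {poly nat} :=
  \poly_(i < size P) (if S i then P`_i else 0%N).

Lemma coef_poly_restrict S P i : (poly_restrict S P)`_i = if S i then P`_i else 0%N.
Proof.
rewrite coef_poly; case: ltnP => // /leq_sizeP Pz.
by rewrite Pz //; case: (S i).
Qed.

Definition lopsided H :=
  [/\ H`_0 != 0%N, exists i, H`_i = 1%N &
      forall i j, (0 < i)%N -> (0 < j)%N -> (i + j = (size H).-1)%N -> H`_i * H`_j = 0%N].

Lemma lopsided_factor H A B :
  lopsided H -> A * B = H -> A`_0 != 0%N -> B`_0 != 0%N -> A = 1 \/ B = 1.
Proof.
case=> _ [k Hk1] Hgap AB A0 B0.
have [sA|sA] := leqP (size A) 1.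
  have eA := size1_polyC sA; left; move: Hk1; rewrite -AB eA coefCM.
  by move/eqP; rewrite muln_eq1 eA => /andP[/eqP-> _].
have [sB|sB] := leqP (size B) 1.
  have eB := size1_polyC sB; right; move: Hk1; rewrite -AB eB coefMC.
  by move/eqP; rewrite muln_eq1 eB => /andP[_ /eqP->].
have lA : lead_coef A != 0%N by rewrite lead_coef_eq0 -size_poly_gt0 ltnW.
have lB : lead_coef B != 0%N by rewrite lead_coef_eq0 -size_poly_gt0 ltnW.
have sH : (size H).-1 = ((size A).-1 + (size B).-1)%N.
  by rewrite -AB size_proper_mul ?natrME ?muln_eq0 ?negb_or ?lA //; lia.
have HA := leq_coefM A B (leqnn (size A).-1).
have HB := leq_coefM A B (leq0n (size B).-1).
have dA : (0 < (size A).-1)%N by lia.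
have dB : (0 < (size B).-1)%N by lia.
move: HA HB (Hgap _ _ dA dB (esym sH)); rewrite AB subnn subn0.
move: A0 B0 lA lB; rewrite /lead_coef; nia.
Qed.

Lemma lopsided_1_Xn_add (t : nat) (S : pred nat) Q :
  (0 < t)%N -> (forall i j, S i -> S j -> (i + j != t)%N) ->
  (forall i, Q`_i != 0%N -> S i && (i <= t)%N) -> lopsided (1 + 'X^t + Q).
Proof.
move=> t0 St Qsupp.
have cH i : (1 + 'X^t + Q)`_i = ((i == 0%N) + (i == t) + (Q`_i)%R)%N.
  by rewrite !coefD coef1 coefXn !natn.
have QS i : ~~ S i -> Q`_i = 0%N.
  by move=> Si; apply/eqP; apply: contraNT Si => /Qsupp/andP[].
have Qt i : (t < i)%N -> Q`_i = 0%N.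
  by move=> ti; apply/eqP; apply: contraTT ti => /Qsupp/andP[_]; rewrite -leqNgt.
have sH : (size (1 + 'X^t + Q)).-1 = t.
  by rewrite (@size_poly_eqS _ t) // => [|i ti]; rewrite cH; [|rewrite Qt //]; lia.
split; first by rewrite cH.
  case S0: (S 0%N).
    by exists t; rewrite cH QS; [lia | apply/negP => /(St _ _ S0); rewrite eqxx].
  by exists 0%N; rewrite cH QS ?S0 //; lia.
move=> i j i0 j0; rewrite sH cH cH => ijt.
have : Q`_i = 0%N \/ Q`_j = 0%N.
  case Si: (S i); last by left; rewrite QS ?Si.
  by right; apply: QS; apply/negP => /(St _ _ Si); rewrite ijt eqxx.
nia.
Qed.

Lemma lopsided_1_add (d : nat) Q :
  (0 < d)%N -> Q`_d != 0%N -> (forall i, i != d -> Q`_i = 0%N) -> lopsided (1 + Q).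
Proof.
move=> d0 Qd Qz.
have cH i : (1 + Q)`_i = ((i == 0%N) + (Q`_i)%R)%N by rewrite coefD coef1 natn.
have H0 : (1 + Q)`_0 = 1%N by rewrite cH Qz //; lia.
have sH : (size (1 + Q)).-1 = d.
  by rewrite (@size_poly_eqS _ d) // => [|i di]; rewrite cH; [|rewrite Qz]; lia.
split; [by rewrite H0 | by exists 0%N | ].
by move=> i j i0 j0; rewrite sH => ijd; rewrite cH (Qz i); lia.
Qed.

Lemma exists_lopsided_1_Xn_add (t m : nat) (S : pred nat) P :
  (0 < t)%N -> (forall i j, S i -> S j -> (i + j != t)%N) ->
  (forall i, P`_i != 0%N -> S i && (i <= t)%N) -> (2 <= m <= P.[1%N] + 2)%N ->
  exists Q R, [/\ P = Q + R, lopsided (1 + 'X^t + Q) & (1 + 'X^t + Q).[1%N] = m].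
Proof.
move=> t0 St Psupp m_bound.
have [|Q [R [eP Q1]]] := @horner1_split P (m - 2); first by lia.
exists Q, R; split => //; last by rewrite !hornerE Q1 expr1n; lia.
apply: (lopsided_1_Xn_add t0 St) => i Qi; apply: Psupp.
by move: Qi; rewrite eP coefD; lia.
Qed.

Lemma exists_lopsided_summand F m :
  F`_0 != 0%N -> (1 < size F)%N -> (1 < m)%N -> (3 * (m - 2) < F.[1%N])%N ->
  exists G H, [/\ F = G + H, lopsided H & H.[1%N] = m].
Proof.
move=> F0 sF m1 Fm; set t := (size F).-1.
have t0 : (0 < t)%N by rewrite /t; lia.
have Ft : F`_t != 0%N.
  by change (lead_coef F != 0%N); rewrite lead_coef_eq0 -size_poly_gt0; lia.
have Fz i : (t < i)%N -> F`_i = 0%N.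
  by move=> ti; apply: nth_default; move: ti; rewrite /t; case: (size F).
have [F' eF] : exists F', F = 1 + 'X^t + F'.
  apply: poly_nat_complement => i; rewrite coefD coef1 coefXn !natn.
  by have [->|i0] := eqVneq i 0%N; [|have [->|it] := eqVneq i t]; lia.
have F'z i : (t < i)%N -> F'`_i = 0%N.
  by move=> ti; have := Fz i ti; rewrite eF !coefD; lia.
pose lo i := (2 * i < t)%N; pose mid i := (2 * i == t)%N; pose hi i := (t < 2 * i)%N.
set L := poly_restrict lo F'; set M := poly_restrict mid F'; set U := poly_restrict hi F'.
have eF' : F' = L + M + U.
  apply/polyP => i; rewrite !coefD !coef_poly_restrict /lo /mid /hi.
  by case: ltngtP; rewrite ?addr0 ?add0r.
have supp S i : (poly_restrict S F')`_i != 0%N -> S i && (i <= t)%N.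
  rewrite coef_poly_restrict; case: (S i) => //= nz.
  by rewrite leqNgt; apply: contra nz => /F'z ->.
have F1 : F.[1%N] = (2 + L.[1%N] + M.[1%N] + U.[1%N])%N.
  by rewrite eF eF' !hornerD hornerC hornerXn expr1n; lia.
have [Lm|Lm] := leqP (m - 2) L.[1%N].
  have [i j||Q [R [eL lH H1]]] := @exists_lopsided_1_Xn_add t m lo L t0 _ (supp lo).
  - by rewrite /lo; lia.
  - by lia.
  - by exists (R + M + U), (1 + 'X^t + Q); split => //; rewrite eF eF' eL; ring.
have [Um|Um] := leqP (m - 2) U.[1%N].
  have [i j||Q [R [eU lH H1]]] := @exists_lopsided_1_Xn_add t m hi U t0 _ (supp hi).
  - by rewrite /hi; lia.
  - by lia.
  - by exists (L + M + R), (1 + 'X^t + Q); split => //; rewrite eF eF' eU; ring.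
have [|Q [R [eM Q1]]] := @horner1_split M (m - 1); first by lia.
exists ('X^t + L + R + U), (1 + Q); split; first by rewrite eF eF' eM; ring.
  have Qmid i : Q`_i != 0%N -> (2 * i = t)%N.
    by move=> Qi; have /supp/andP[/eqP] : M`_i != 0%N by move: Qi; rewrite eM coefD; lia.
  have Qd : Q`_(size Q).-1 != 0%N.
    change (lead_coef Q != 0%N); rewrite lead_coef_eq0.
    by apply/eqP => Q0; move: Q1; rewrite Q0 horner0; lia.
  apply: (lopsided_1_add _ Qd); first by have := Qmid _ Qd; lia.
  by move=> i; apply: contraNeq => /Qmid; have := Qmid _ Qd; lia.
by rewrite hornerD hornerC Q1; lia.
Qed.

End NatPoly.

Section Laurent.
Implicit Types (k : int) (P Q A B H : {poly nat}).

Lemma lcoef_addz k P (i : nat) : lcoef (k, P) (k + i%:Z) = P`_i.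
Proof. by rewrite /lcoef /= lerDl /= addrC addKr absz_nat. Qed.

Lemma lcoef_ltz k P n : n < k -> lcoef (k, P) n = 0%N.
Proof. by rewrite /lcoef /= => /lt_geF->. Qed.

Lemma ltz_or_addz (k n : int) : n < k \/ exists i : nat, n = k + i%:Z.
Proof.
have [kn|] := lerP k n; last by left.
by right; exists `|n - k|%N; rewrite gez0_abs ?subr_ge0 //; lia.
Qed.

Lemma lcoefD k P Q n : lcoef (k, P + Q) n = (lcoef (k, P) n + lcoef (k, Q) n)%N.
Proof. by rewrite /lcoef /= coefD; case: ifP. Qed.

Lemma lcoef_Xn_mul k (v : nat) P n : lcoef (k, 'X^v * P) n = lcoef (k + v%:Z, P) n.
Proof.
have [nk|[i ->]] := ltz_or_addz k n.
  by rewrite !lcoef_ltz // (lt_le_trans nk) // lerDl.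
rewrite lcoef_addz coefXnM; case: ltnP => [iv|vi].
  by rewrite lcoef_ltz // ltrD2l ltz_nat.
by rewrite -(subnKC vi) PoszD addrA lcoef_addz addKn.
Qed.

Lemma lcoef1 k n : lcoef (k, 1) n = (n == k).
Proof.
have [nk|[i ->]] := ltz_or_addz k n; first by rewrite lcoef_ltz // lt_eqF.
by rewrite lcoef_addz coef1 natn -{2}[k]addr0 (inj_eq (addrI k)).
Qed.

Lemma lunit_Xn k (v : nat) : lunit (k, 'X^v).
Proof. by exists (k + v%:Z) => n; rewrite -[_ ^+ v]mulr1 lcoef_Xn_mul lcoef1. Qed.

Lemma leqv_Xn_mul (k k' : int) P P' :
  leqv (k, P) (k', P') -> k <= k' -> P = 'X^`|k' - k| * P'.
Proof.
move=> E kk'; have ek' : k' = k + `|k' - k|%N%:Z.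
  by rewrite gez0_abs ?subr_ge0 //; lia.
apply/polyP => i; have := E (k + i%:Z); rewrite lcoef_addz => ->.
by rewrite {1}ek' -lcoef_Xn_mul lcoef_addz.
Qed.

Lemma leqv_coef0_eq (k k' : int) P P' :
  leqv (k, P) (k', P') -> P`_0 != 0%N -> P'`_0 != 0%N -> P = P'.
Proof.
have le_eq (l l' : int) Q Q' : leqv (l, Q) (l', Q') -> l <= l' -> Q`_0 != 0%N -> Q = Q'.
  move=> E ll'; rewrite (leqv_Xn_mul E ll') coefXnM.
  by case: `|l' - l|%N => [_|//]; rewrite mul1r.
move=> E P0 P'0; have [kk'|k'k] := lerP k k'; first exact: le_eq E kk' P0.
by apply/esym/(le_eq _ _ _ _ _ (ltW k'k) P'0) => n; rewrite E.
Qed.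

Lemma lirreducible_leqv f f' : leqv f f' -> lirreducible f -> lirreducible f'.
Proof.
move=> E [[n fn] Nunit irr]; split; first by exists n; rewrite -E.
  by case=> u hu; apply: Nunit; exists u => n'; rewrite E.
by move=> g h E'; apply: irr => n'; rewrite E E'.
Qed.

Lemma lirreducible_coef0 k P :
  P`_0 != 0%N -> P != 1 ->
  (forall A B, A * B = P -> A`_0 != 0%N -> B`_0 != 0%N -> A = 1 \/ B = 1) ->
  lirreducible (k, P).
Proof.
move=> P0 P1 irrP; have Pk : lcoef (k, P) k = P`_0 by have := lcoef_addz k P 0; rewrite addr0.
split; first by exists k; rewrite Pk; apply/eqP.
  case=> u hu; move/eqP: P1; apply; apply: (@leqv_coef0_eq k u) => // [n|].
    by rewrite hu lcoef1.
  by rewrite coef1.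
move=> [ka A] [kb B] E.
have AB0 : A * B != 0.
  by apply: contra P0 => /eqP AB0; have := E k; rewrite Pk /lcoef /= AB0 coef0 if_same => ->.
have [va [A' [eA A'0]]] : exists v A', A = 'X^v * A' /\ A'`_0 != 0%N.
  by apply: poly_Xn_normal; apply: contraNneq AB0 => ->; rewrite mul0r.
have [vb [B' [eB B'0]]] : exists v B', B = 'X^v * B' /\ B'`_0 != 0%N.
  by apply: poly_Xn_normal; apply: contraNneq AB0 => ->; rewrite mulr0.
have E' : leqv (k, P) (ka + kb + (va + vb)%N%:Z, A' * B').
  by move=> n; rewrite E -lcoef_Xn_mul eA eB exprD mulrACA.
have [|A'1|B'1] := irrP A' B' (esym (leqv_coef0_eq E' P0 _)) A'0 B'0.
- by rewrite coef0M natrME muln_eq0 negb_or A'0.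
- by left; rewrite eA A'1 mulr1; apply: lunit_Xn.
- by right; rewrite eB B'1 mulr1; apply: lunit_Xn.
Qed.

Lemma lirreducible_prime k P : prime P.[1%N] -> lirreducible (k, P).
Proof.
move=> Pp; have P0 : P != 0 by apply: contraTneq Pp => ->; rewrite horner0.
have [v [Q [eP Q0]]] := poly_Xn_normal P0.
apply: (@lirreducible_leqv (k + v%:Z, Q)) => [n|]; first by rewrite eP lcoef_Xn_mul.
have QP : Q.[1%N] = P.[1%N] by rewrite eP hornerM hornerXn expr1n mul1r.
apply: lirreducible_coef0 => // [|A B AB A0 B0].
  by apply: contraTneq Pp => Q1; rewrite -QP Q1 hornerC.
have ABp : (A.[1%N] * B.[1%N] = P.[1%N])%N by rewrite -QP -AB hornerM.
have [A1|A1] := eqVneq A.[1%N] 1%N; first by left; apply: horner1_eq1.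
right; apply: horner1_eq1 => //.
have /(prime_nt_dvdP Pp A1) Ap : (A.[1%N] %| P.[1%N])%N by rewrite -ABp dvdn_mulr.
by move: ABp (prime_gt0 Pp); rewrite Ap; nia.
Qed.

Lemma lirreducible_lopsided k H : lopsided H -> H != 1 -> lirreducible (k, H).
Proof.
move=> lH H1; case: (lH) => H0 _ _; apply: lirreducible_coef0 => // A B.
exact: lopsided_factor.
Qed.

End Laurent.

Theorem lemma2p10 (f : laurent) (p : nat) :
  (3 <= supp_size f)%N ->
  prime p ->
  (5%:Q * (eval1 f)%:Q / 6%:Q - 1 <= p%:Q)%R ->
  (p%:Q <= (eval1 f)%:Q - 2%:Q)%R ->
  exists g h : laurent,
    [/\ lirreducible g, lirreducible h &
        forall n : int, lcoef f n = (lcoef g n + lcoef h n)%N].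
Proof.
case: f => k F supp3 p_prime p_lo p_hi; rewrite /eval1 /= in p_lo p_hi.
have [Np pN] : (5 * F.[1%N] <= 6 * p + 6)%N /\ (p + 2 <= F.[1%N])%N.
  by split; rewrite -(ler_nat rat) ?natrD ?natrM; lra.
have F0 : F != 0 by apply: contraTneq supp3 => ->; rewrite /supp_size polyseq0.
have [v [F' [eF F'0]]] := poly_Xn_normal F0.
have sF' : (1 < size F')%N.
  have := count_size (fun c : nat => c != 0%N) F'.
  by move: supp3; rewrite /supp_size /= eF count_nz_Xn_mul; lia.
have F'1 : F'.[1%N] = F.[1%N] by rewrite eF hornerM hornerXn expr1n mul1r.
have [||G [H [eF' lH H1]]] := @exists_lopsided_summand F' (F.[1%N] - p) F'0 sF'.
- by lia.
- by lia.
have G1 : G.[1%N] = p by move: F'1; rewrite eF' hornerD H1; lia.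
exists (k + v%:Z, G), (k + v%:Z, H); split.
- by apply: lirreducible_prime; rewrite G1.
- apply: lirreducible_lopsided => //.
  by apply/eqP => H_1; move: H1; rewrite H_1 hornerC; lia.
- by move=> n; rewrite eF lcoef_Xn_mul eF' lcoefD.
Qed.
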